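(* Let $V$ be a finite family of L-frames all anchored at $D$ from above, $G$ its intersection graph, and $\mathcal B,\mathcal R\subseteq V$ disjoint dominating sets of $G$. Let $H=(\mathcal B\cup\mathcal R,E')$ be the bipartite graph and its drawing defined in the context. Then in this drawing no two arcs cross except at common endpoints: no two top arcs cross, no two down arcs cross, no mixed arc crosses a top arc, no mixed arc crosses a down arc, and no two mixed arcs cross. In particular $H$ is planar.
   Context: Fix a line $D$ of slope $-1$. An L-frame is the union of a closed horizontal segment and a closed vertical segment sharing an endpoint, its corner $\mathrm{cor}(\cdot)$. An L-frame is anchored at $D$ from above if its corner is on $D$, its horizontal segment goes right from the corner and its vertical segment goes up. For intersecting L-frames $L_1,L_2$ anchored from above, $L_1$ intersects $L_2$ from the left if $x(\mathrm{cor}(L_1))\le x(\mathrm{cor}(L_2))$, and from below if $x(\mathrm{cor}(L_1))\ge x(\mathrm{cor}(L_2))$. Definition of $H$: for each $u\in V$, among all pairs $(b,r)\in\mathcal B\times\mathcal R$ such that both $b$ and $r$ intersect $u$ (an L-frame intersects itself), choose one pair minimizing the Euclidean distance $\mathrm{dist}(\mathrm{cor}(b),\mathrm{cor}(r))$ and put $(b,r)$ in $E'$; $u$ is called a witness of $(b,r)$. An arc $(b,r)\in E'$ is a top arc if it has a witness $u$ that both $b$ and $r$ intersect from the left (fix such $u$ as $w(b,r)$); otherwise it is a down arc if it has a witness $v$ that both $b$ and $r$ intersect from below (fix such $v$ as $w(b,r)$); otherwise it is a mixed arc, and $w(b,r)$ is any witness (which $b$ and $r$ intersect from different sides). Drawing: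 vertex $u$ is placed at $\mathrm{cor}(u)\in D$. For an arc $(p,q)$ with $x(\mathrm{cor}(p))<x(\mathrm{cor}(q))$: a top (resp. down) arc is drawn as the half of the circle with diameter segment $\mathrm{cor}(p)\mathrm{cor}(q)$ lying above (resp. below) $D$. For a mixed arc, where $p$ intersects $w=w(p,q)$ from the left and $q$ intersects $w$ from below (so $x(\mathrm{cor}(p))<x(\mathrm{cor}(w))<x(\mathrm{cor}(q))$), it is drawn as the half of the circle with diameter $\mathrm{cor}(p)\mathrm{cor}(w)$ above $D$ followed by the half of the circle with diameter $\mathrm{cor}(w)\mathrm{cor}(q)$ below $D$. *)

From Stdlib Require Import Reals Lra List.
Open Scope R_scope.

Definition point := (R * R)%type.

Definition onD (c : R) (p : point) : Prop := fst p + snd p = c.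

(* An L-frame is given by its corner (cx,cy), the x-coordinate [hend] of the
   other endpoint of its horizontal segment (at height cy), and the
   y-coordinate [vend] of the other endpoint of its vertical segment
   (at abscissa cx). *)
Record Lframe := mkLframe { cx : R; cy : R; hend : R; vend : R }.

Definition cor (L : Lframe) : point := (cx L, cy L).

Definition onFrame (L : Lframe) (p : point) : Prop :=
  (snd p = cy L /\ Rmin (cx L) (hend L) <= fst p <= Rmax (cx L) (hend L)) \/
  (fst p = cx L /\ Rmin (cy L) (vend L) <= snd p <= Rmax (cy L) (vend L)).

Definition anchored_above (c : R) (L : Lframe) : Prop :=
  onD c (cor L) /\ cx L < hend L /\ cy L < vend L.

Definition intersects (L1 L2 : Lframe) : Prop :=
  exists p, onFrame L1 p /\ onFrame L2 p.

Definition int_from_left (L1 L2 : Lframe) : Prop :=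
  intersects L1 L2 /\ cx L1 <= cx L2.

Definition int_from_below (L1 L2 : Lframe) : Prop :=
  intersects L1 L2 /\ cx L1 >= cx L2.

Definition dist (p q : point) : R :=
  sqrt ((fst p - fst q)^2 + (snd p - snd q)^2).

Definition G_adj {I : Type} (F : I -> Lframe) (u v : I) : Prop :=
  u <> v /\ intersects (F u) (F v).

Definition dominating {I : Type} (F : I -> Lframe) (S : I -> Prop) : Prop :=
  forall u, S u \/ exists s, S s /\ G_adj F u s.

Definition cand {I : Type} (F : I -> Lframe) (B Rd : I -> Prop)
  (u b r : I) : Prop :=
  B b /\ Rd r /\ intersects (F b) (F u) /\ intersects (F r) (F u).

(* [pick] realises the choice in the definition of H: for every u, pick u is
   a candidate pair minimising dist (cor b) (cor r). *)
Definition valid_pick {I : Type} (F : I -> Lframe) (B Rd : I -> Prop)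
  (pick : I -> I * I) : Prop :=
  forall u, cand F B Rd u (fst (pick u)) (snd (pick u)) /\
    forall b r, cand F B Rd u b r ->
      dist (cor (F (fst (pick u)))) (cor (F (snd (pick u))))
        <= dist (cor (F b)) (cor (F r)).

Definition arc {I : Type} (pick : I -> I * I) (b r : I) : Prop :=
  exists u, pick u = (b, r).

Definition top_arc {I : Type} (F : I -> Lframe) (pick : I -> I * I)
  (b r : I) : Prop :=
  exists u, pick u = (b, r) /\ int_from_left (F b) (F u) /\
                                int_from_left (F r) (F u).

Definition down_arc {I : Type} (F : I -> Lframe) (pick : I -> I * I)
  (b r : I) : Prop :=
  ~ top_arc F pick b r /\
  exists v, pick v = (b, r) /\ int_from_below (F b) (F v) /\
                                int_from_below (F r) (F v).

Definition mixed_arc {I : Type} (F : I -> Lframe) (pick : I -> I * I)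
  (b r : I) : Prop :=
  arc pick b r /\ ~ top_arc F pick b r /\ ~ down_arc F pick b r.

(* [w] realises the choice of the witness w(b,r) of a mixed arc. *)
Definition valid_mixed_witness {I : Type} (F : I -> Lframe)
  (pick : I -> I * I) (w : I -> I -> I) : Prop :=
  forall b r, mixed_arc F pick b r -> pick (w b r) = (b, r).

Definition on_circle_diam (A B P : point) : Prop :=
  let mx := (fst A + fst B) / 2 in
  let my := (snd A + snd B) / 2 in
  (fst P - mx)^2 + (snd P - my)^2
    = ((fst A - fst B)^2 + (snd A - snd B)^2) / 4.

Definition upper_half (c : R) (A B P : point) : Prop :=
  on_circle_diam A B P /\ fst P + snd P >= c.

Definition lower_half (c : R) (A B P : point) : Prop :=
  on_circle_diam A B P /\ fst P + snd P <= c.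

Definition drawn {I : Type} (c : R) (F : I -> Lframe) (pick : I -> I * I)
  (w : I -> I -> I) (b r : I) (P : point) : Prop :=
  (top_arc F pick b r /\ upper_half c (cor (F b)) (cor (F r)) P) \/
  (down_arc F pick b r /\ lower_half c (cor (F b)) (cor (F r)) P) \/
  (mixed_arc F pick b r /\
     let m := w b r in
     ((cx (F b) < cx (F m) /\
        (upper_half c (cor (F b)) (cor (F m)) P \/
         lower_half c (cor (F m)) (cor (F r)) P)) \/
      (cx (F r) < cx (F m) /\
        (upper_half c (cor (F r)) (cor (F m)) P \/
         lower_half c (cor (F m)) (cor (F b)) P)))).

From Pilot Require Import Defs.
From Stdlib Require Import Reals Lra List.
Open Scope R_scope.

Set Implicit Arguments.

(* Write every point as its orthogonal projection on D plus a normal offset.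
   A drawn semicircle with diameter [a, z] on D is then {(s, e) | (s - a)(s - z)
   = -e^2/4}, so two semicircles on the same side of D meet off D only if their
   diameters interleave or coincide.  Each upper semicircle of the drawing joins
   an end a of the pair chosen for a witness u, meeting u from the left, to a
   point z that is the other end or the (uncoloured) witness u itself.  If two
   such diameters interleave, an end of one pair meets the other witness and lies
   strictly inside the other diameter, hence is closer to one end of that pair
   than its partner, against the minimality of the chosen pair.  Lower
   semicircles are upper ones for the reflected configuration.  A common point
   on D is a corner, and since mixed witnesses are uncoloured it is an end of
   both arcs. *)

Lemma semicircles_meet_interleaved a b a' b' s E :
  a < b -> a' < b' -> 0 < E ->
  (s - a) * (s - b) = - E -> (s - a') * (s - b') = - E ->
  (a < a' < b /\ b < b') \/ (a' < a < b' /\ b' < b) \/ (a = a' /\ b = b').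
Proof.
  intros Hab Hab' HE Hs Hs'.
  assert (a < s < b) by nra. assert (a' < s < b') by nra.
  destruct (Rtotal_order a a') as [Ha|[Ha|Ha]];
  destruct (Rtotal_order b b') as [Hb|[Hb|Hb]]; try (subst; nra); lra.
Qed.

Section LineModel.

Variables (I : Type) (t lo hi : I -> R).

(* [meets_left u x]: x meets u from the left, i.e. [int_from_left (F x) (F u)]. *)
Definition meets_left (u x : I) : Prop := t x <= t u <= hi x /\ lo u <= t x.
Definition meets_below (u x : I) : Prop := t u <= t x <= hi u /\ lo x <= t u.
Definition meets (u x : I) : Prop := meets_left u x \/ meets_below u x.

Variables (B Rd : I -> Prop) (pick : I -> I * I).

Record line_model : Prop := {
  lo_lt_hi : forall i, lo i < t i < hi i;
  t_inj : forall i j, t i = t j -> i = j;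
  colours_disjoint : forall i, B i -> Rd i -> False;
  pick_coloured : forall u, B (fst (pick u)) /\ Rd (snd (pick u));
  pick_meets : forall u, meets u (fst (pick u)) /\ meets u (snd (pick u));
  pick_closest : forall u x y, B x -> Rd y -> meets u x -> meets u y ->
    (t (fst (pick u)) - t (snd (pick u)))^2 <= (t x - t y)^2 }.

Hypothesis M : line_model.

Lemma meets_left_refl u : meets_left u u.
Proof. pose proof (lo_lt_hi M u). unfold meets_left; lra. Qed.

Lemma meets_left_of_le u x : meets u x -> t x <= t u -> meets_left u x.
Proof.
  pose proof (lo_lt_hi M u); pose proof (lo_lt_hi M x).
  unfold meets, meets_left, meets_below; intros [Hm|Hm] Hle; lra.
Qed.

Definition pick_ends (u a o : I) : Prop :=
  (a = fst (pick u) /\ o = snd (pick u)) \/ (a = snd (pick u) /\ o = fst (pick u)).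

Lemma pick_ends_sym u a o : pick_ends u a o -> pick_ends u o a.
Proof. unfold pick_ends; tauto. Qed.

Lemma pick_ends_coloured u a o : pick_ends u a o -> (B a \/ Rd a) /\ (B o \/ Rd o).
Proof.
  destruct (pick_coloured M u). intros [[-> ->]|[-> ->]]; tauto.
Qed.

Lemma pick_ends_meet u a o : pick_ends u a o -> meets u a /\ meets u o.
Proof.
  destruct (pick_meets M u). intros [[-> ->]|[-> ->]]; tauto.
Qed.

Lemma pick_ends_neq u a o : pick_ends u a o -> t a <> t o.
Proof.
  destruct (pick_coloured M u) as [Bf Rs].
  intros [[-> ->]|[-> ->]] E; apply (t_inj M) in E;
    [rewrite E in Bf | rewrite E in Rs]; eapply (colours_disjoint M); eauto.
Qed.

Lemma pick_ends_closest u a o z : pick_ends u a o -> B z \/ Rd z -> meets u z ->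
  (t o - t a)^2 <= (t z - t a)^2 \/ (t o - t a)^2 <= (t z - t o)^2.
Proof.
  intros Hends Hz Mz.
  destruct (pick_coloured M u) as [Bf Rs], (pick_meets M u) as [Mf Ms].
  destruct Hz as [Bz|Rz].
  - pose proof (pick_closest M Bz Rs Mz Ms).
    destruct Hends as [[-> ->]|[-> ->]]; [right|left]; nra.
  - pose proof (pick_closest M Bf Rz Mf Mz).
    destruct Hends as [[-> ->]|[-> ->]]; [left|right]; nra.
Qed.

Lemma between_pick_ends_uncoloured u a o :
  pick_ends u a o -> t a < t u < t o -> ~ B u /\ ~ Rd u.
Proof.
  intros Hends Hu.
  assert (Mu : meets u u) by (left; apply meets_left_refl).
  split; intro Cu;
    [ destruct (pick_ends_closest Hends (or_introl Cu) Mu)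
    | destruct (pick_ends_closest Hends (or_intror Cu) Mu) ]; nra.
Qed.

(* A semicircle drawn above D for the witness u: either the whole top arc
   from [a] to [z = o], or the first half of a mixed arc, from [a] to its
   uncoloured witness [z = u]. *)
Definition upper_piece (u a z o : I) : Prop :=
  pick_ends u a o /\ t a < t z <= t o /\ meets_left u a /\ meets_left u z /\
  (z = o \/ (z = u /\ ~ B u /\ ~ Rd u)).

Lemma top_upper_piece u a o : pick_ends u a o -> meets_left u a -> meets_left u o ->
  upper_piece u a o o \/ upper_piece u o a a.
Proof.
  intros Hends La Lo. pose proof (pick_ends_neq Hends) as Hne.
  destruct (Rtotal_order (t a) (t o)) as [Hlt|[Heq|Hgt]]; [left| contradiction |right];
    (split; [auto using pick_ends_sym | split; [lra | intuition]]).
Qed.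

Lemma mixed_upper_piece u a o : pick_ends u a o -> t a < t u < t o -> meets_left u a ->
  upper_piece u a u o.
Proof.
  intros Hends Hu La.
  pose proof (between_pick_ends_uncoloured Hends Hu).
  split; [exact Hends | split; [lra|]].
  split; [exact La | split; [apply meets_left_refl | tauto]].
Qed.

Lemma upper_pieces_not_interleaved u1 a1 z1 o1 u2 a2 z2 o2 :
  upper_piece u1 a1 z1 o1 -> upper_piece u2 a2 z2 o2 ->
  t a1 < t a2 < t z1 -> t z1 < t z2 -> False.
Proof.
  intros (E1 & O1 & La1 & Lz1 & Z1) (E2 & O2 & La2 & Lz2 & Z2) H12 H2.
  unfold meets_left in *.
  destruct (Rle_dec (t u1) (t u2)) as [Hu|Hu].
  - assert (Ma2 : meets u1 a2) by (left; unfold meets_left; lra).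
    destruct (pick_ends_closest E1 (proj1 (pick_ends_coloured E2)) Ma2); nra.
  - destruct Z1 as [-> | [-> _]]; [|lra].
    assert (Mo1 : meets u2 o1) by (left; unfold meets_left; lra).
    destruct (pick_ends_closest E2 (proj2 (pick_ends_coloured E1)) Mo1); nra.
Qed.

Lemma upper_pieces_same_ends u1 a z o1 u2 o2 :
  upper_piece u1 a z o1 -> upper_piece u2 a z o2 -> pick u1 = pick u2.
Proof.
  intros (E1 & _ & _ & _ & Z1) (E2 & _ & _ & _ & Z2).
  destruct Z1 as [<- | (-> & N1 & N1')], Z2 as [<- | (Ez & N2 & N2')].
  - destruct (pick_coloured M u1), (pick_coloured M u2).
    unfold pick_ends in *; destruct (pick u1) as [x1 y1], (pick u2) as [x2 y2]; simpl in *.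
    destruct E1 as [[-> ->]|[-> ->]], E2 as [[-> ->]|[-> ->]];
      solve [reflexivity | exfalso; eapply (colours_disjoint M); eauto].
  - subst z. destruct (pick_ends_coloured E1) as [_ []]; contradiction.
  - destruct (pick_ends_coloured E2) as [_ []]; contradiction.
  - subst; reflexivity.
Qed.

Lemma upper_pieces_disjoint u1 a1 z1 o1 u2 a2 z2 o2 s E :
  upper_piece u1 a1 z1 o1 -> upper_piece u2 a2 z2 o2 -> pick u1 <> pick u2 -> 0 < E ->
  (s - t a1) * (s - t z1) = - E -> (s - t a2) * (s - t z2) = - E -> False.
Proof.
  intros U1 U2 N HE C1 C2.
  pose proof U1 as (_ & [O1 _] & _). pose proof U2 as (_ & [O2 _] & _).
  destruct (semicircles_meet_interleaved O1 O2 HE C1 C2) as [H|[H|[Ha Hz]]].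
  - apply (upper_pieces_not_interleaved U1 U2); tauto.
  - apply (upper_pieces_not_interleaved U2 U1); tauto.
  - apply (t_inj M) in Ha, Hz; subst.
    exact (N (upper_pieces_same_ends U1 U2)).
Qed.

Definition arc_node (u z : I) : Prop :=
  z = fst (pick u) \/ z = snd (pick u) \/ (pick z = pick u /\ ~ B z /\ ~ Rd z).

Lemma upper_piece_nodes u a z o : upper_piece u a z o -> arc_node u a /\ arc_node u z.
Proof.
  intros (E & _ & _ & _ & Z). unfold arc_node.
  destruct E as [[-> ->]|[-> ->]], Z as [-> | (-> & ? & ?)]; intuition.
Qed.

Lemma arc_node_common u1 u2 z : pick u1 <> pick u2 -> arc_node u1 z -> arc_node u2 z ->
  (z = fst (pick u1) \/ z = snd (pick u1)) /\ (z = fst (pick u2) \/ z = snd (pick u2)).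
Proof.
  intros N E1 E2. destruct (pick_coloured M u1), (pick_coloured M u2).
  destruct E1 as [->|[->|(P1 & ? & ?)]], E2 as [->|[->|(P2 & ? & ?)]]; try tauto.
  exfalso; apply N; congruence.
Qed.

End LineModel.

Section Frames.

Variables (c : R) (I : Type) (F : I -> Lframe) (B Rd : I -> Prop)
  (pick : I -> I * I) (w : I -> I -> I).

Hypothesis anchored : forall i, anchored_above c (F i).
Hypothesis cor_inj : forall i j, cor (F i) = cor (F j) -> i = j.
Hypothesis colours_disjoint : forall i, B i -> Rd i -> False.
Hypothesis pick_valid : valid_pick F B Rd pick.
Hypothesis witness_valid : valid_mixed_witness F pick w.

(* The corner of frame [i] is the point of D of abscissa [t i]; its horizontal
   arm ends at abscissa [hi i], its vertical arm at the height of the point of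
   D of abscissa [lo i]. *)
Let t i := cx (F i).
Let lo i := c - vend (F i).
Let hi i := hend (F i).

(* Reflecting through the normal to D swaps meeting from the left and from
   below, so the lower semicircles are the upper ones of the mirror image. *)
Let mt i := - t i.
Let mlo i := - hi i.
Let mhi i := - lo i.

Lemma cy_cor i : cy (F i) = c - t i.
Proof. destruct (anchored i) as [H _]. unfold onD, cor in H; simpl in H. unfold t; lra. Qed.

Lemma intersects_meets x u : intersects (F x) (F u) <-> meets t lo hi u x.
Proof.
  destruct (anchored x) as [_ [Hx Hx']], (anchored u) as [_ [Hu Hu']].
  pose proof (cy_cor x); pose proof (cy_cor u).
  unfold meets, meets_left, meets_below, intersects, onFrame, lo, hi, t in *. split.
  - intros [p [Hpx Hpu]]. rewrite !Rmin_left, !Rmax_right in Hpx, Hpu by lra.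
    destruct (Rle_dec (cx (F x)) (cx (F u))); [left|right];
      (destruct Hpx as [Hpx|Hpx]; destruct Hpu as [Hpu|Hpu]; repeat split; lra).
  - rewrite !Rmin_left, !Rmax_right by lra. intros [Hl|Hb].
    + exists (cx (F u), c - cx (F x)); simpl. split; [left|right]; split; lra.
    + exists (cx (F x), c - cx (F u)); simpl. split; [right|left]; split; lra.
Qed.

Lemma dist_cor i j : Defs.dist (cor (F i)) (cor (F j)) = sqrt (2 * (t i - t j)^2).
Proof. unfold Defs.dist, cor; simpl. rewrite (cy_cor i), (cy_cor j). f_equal. unfold t. ring. Qed.

Lemma frames_model : line_model t lo hi B Rd pick.
Proof.
  split.
  - intro i. destruct (anchored i) as [_ [Hh Hv]]. pose proof (cy_cor i).
    unfold lo, hi, t in *; lra.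
  - intros i j E. apply cor_inj. unfold cor. rewrite (cy_cor i), (cy_cor j), E.
    unfold t in E; rewrite E; reflexivity.
  - exact colours_disjoint.
  - intro u. destruct (pick_valid u) as [(Hb & Hr & _) _]. auto.
  - intro u. destruct (pick_valid u) as [(_ & _ & Ib & Ir) _].
    split; apply intersects_meets; assumption.
  - intros u x y Bx Ry Mx My. destruct (pick_valid u) as [_ Hmin].
    assert (Hc : cand F B Rd u x y) by (repeat split; auto; apply intersects_meets; auto).
    specialize (Hmin x y Hc). rewrite !dist_cor in Hmin.
    apply sqrt_le_0 in Hmin; [lra | |]; apply Rmult_le_pos; try lra; apply pow2_ge_0.
Qed.

Lemma meets_mirror u x : meets mt mlo mhi u x <-> meets t lo hi u x.
Proof.
  unfold meets, meets_left, meets_below, mt, mlo, mhi.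
  split; intros [Hm|Hm]; [right|left|right|left]; lra.
Qed.

Lemma mirror_model : line_model mt mlo mhi B Rd pick.
Proof.
  destruct frames_model as [Hb Hinj Hdisj Hcol Hmeet Hmin]. split.
  - intro i. specialize (Hb i). unfold mt, mlo, mhi; lra.
  - intros i j E. apply Hinj. unfold mt in E; lra.
  - exact Hdisj.
  - exact Hcol.
  - intro u. rewrite !meets_mirror. apply Hmeet.
  - intros u x y Bx Ry Mx My. rewrite meets_mirror in Mx, My.
    specialize (Hmin u x y Bx Ry Mx My). unfold mt. nra.
Qed.

(* [P] is the point of D of abscissa [foot P], moved by [offset P / 2] along
   the normal (1,1) of D. *)
Definition offset (P : point) : R := fst P + snd P - c.
Definition foot (P : point) : R := fst P - offset P / 2.

Lemma on_circle_cor x y P : on_circle_diam (cor (F x)) (cor (F y)) P ->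
  (foot P - t x) * (foot P - t y) = - (offset P ^ 2 / 4).
Proof.
  unfold on_circle_diam, cor, foot, offset; simpl. rewrite (cy_cor x), (cy_cor y).
  destruct P as [p q]; simpl. unfold t. intro H. nra.
Qed.

Definition piece (u : I) (P : point) : Prop :=
  exists a z o, (foot P - t a) * (foot P - t z) = - (offset P ^ 2 / 4) /\
    ((0 <= offset P /\ upper_piece t lo hi B Rd pick u a z o) \/
     (offset P <= 0 /\ upper_piece mt mlo mhi B Rd pick u a z o)).

Lemma upper_half_piece u a z o P : upper_piece t lo hi B Rd pick u a z o ->
  upper_half c (cor (F a)) (cor (F z)) P \/ upper_half c (cor (F z)) (cor (F a)) P ->
  piece u P.
Proof.
  intros U [[Hc Hs]|[Hc Hs]]; exists a, z, o; apply on_circle_cor in Hc;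
    (split; [lra | left; split; [unfold offset; lra | exact U]]).
Qed.

Lemma lower_half_piece u a z o P : upper_piece mt mlo mhi B Rd pick u a z o ->
  lower_half c (cor (F a)) (cor (F z)) P \/ lower_half c (cor (F z)) (cor (F a)) P ->
  piece u P.
Proof.
  intros U [[Hc Hs]|[Hc Hs]]; exists a, z, o; apply on_circle_cor in Hc;
    (split; [lra | right; split; [unfold offset; lra | exact U]]).
Qed.

Lemma top_arc_piece b r P : top_arc F pick b r ->
  upper_half c (cor (F b)) (cor (F r)) P -> exists u, pick u = (b, r) /\ piece u P.
Proof.
  intros (u & Hu & [Ib Lb] & [Ir Lr]) Hh. exists u. split; [exact Hu|].
  assert (Hends : pick_ends pick u b r) by (left; rewrite Hu; auto).
  apply intersects_meets, (meets_left_of_le frames_model) in Ib, Ir; try assumption.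
  destruct (top_upper_piece frames_model Hends Ib Ir) as [U|U];
    eapply upper_half_piece; eauto.
Qed.

Lemma down_arc_piece b r P : down_arc F pick b r ->
  lower_half c (cor (F b)) (cor (F r)) P -> exists u, pick u = (b, r) /\ piece u P.
Proof.
  intros (_ & u & Hu & [Ib Lb] & [Ir Lr]) Hh. exists u. split; [exact Hu|].
  assert (Hends : pick_ends pick u b r) by (left; rewrite Hu; auto).
  apply intersects_meets, meets_mirror, (meets_left_of_le mirror_model) in Ib, Ir;
    try (unfold mt, t; lra).
  destruct (top_upper_piece mirror_model Hends Ib Ir) as [U|U];
    eapply lower_half_piece; eauto.
Qed.

Lemma mixed_arc_order b r : mixed_arc F pick b r ->
  t b < t (w b r) < t r \/ t r < t (w b r) < t b.
Proof.
  intros Hm. pose proof (witness_valid Hm) as Hp.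
  destruct Hm as (_ & Ntop & Ndown). set (m := w b r) in *.
  assert (Hends : pick_ends pick m b r) by (left; rewrite Hp; auto).
  destruct (pick_ends_meet frames_model Hends) as [Ib Ir].
  apply intersects_meets in Ib, Ir.
  assert (NT : ~ (t b <= t m /\ t r <= t m)).
  { intros [? ?]. apply Ntop. exists m. repeat split; auto. }
  assert (ND : ~ (t m <= t b /\ t m <= t r)).
  { intros [? ?]. apply Ndown. split; [exact Ntop|]. exists m.
    unfold int_from_below. repeat split; auto; unfold t in *; lra. }
  destruct (Rlt_le_dec (t b) (t m)), (Rlt_le_dec (t r) (t m)).
  - exfalso; apply NT; split; lra.
  - destruct (Req_dec (t r) (t m)); [exfalso; apply NT; split|left]; lra.
  - destruct (Req_dec (t b) (t m)); [exfalso; apply NT; split|right]; lra.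
  - exfalso; apply ND; split; lra.
Qed.

Lemma mixed_halves_piece m a o P : pick_ends pick m a o -> t a < t m < t o ->
  upper_half c (cor (F a)) (cor (F m)) P \/ lower_half c (cor (F m)) (cor (F o)) P ->
  piece m P.
Proof.
  intros Hends Hord [Hh|Hh]; destruct (pick_ends_meet frames_model Hends) as [Ma Mo].
  - apply (meets_left_of_le frames_model) in Ma; [|lra].
    apply (upper_half_piece (mixed_upper_piece frames_model Hends Hord Ma)).
    left; exact Hh.
  - apply meets_mirror, (meets_left_of_le mirror_model) in Mo; [|unfold mt; lra].
    assert (Hord' : mt o < mt m < mt a) by (unfold mt; lra).
    apply (lower_half_piece (mixed_upper_piece mirror_model (pick_ends_sym Hends) Hord' Mo)).
    right; exact Hh.
Qed.

Lemma mixed_arc_piece b r P : mixed_arc F pick b r ->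
  (let m := w b r in
   (cx (F b) < cx (F m) /\
      (upper_half c (cor (F b)) (cor (F m)) P \/ lower_half c (cor (F m)) (cor (F r)) P)) \/
   (cx (F r) < cx (F m) /\
      (upper_half c (cor (F r)) (cor (F m)) P \/ lower_half c (cor (F m)) (cor (F b)) P))) ->
  exists u, pick u = (b, r) /\ piece u P.
Proof.
  intros Hm Hh. pose proof (witness_valid Hm) as Hp. pose proof (mixed_arc_order Hm) as Hord.
  cbv zeta in Hh. exists (w b r). split; [exact Hp|].
  destruct Hh as [[Hlt Hh]|[Hlt Hh]]; fold (t b) (t r) (t (w b r)) in Hlt.
  - apply mixed_halves_piece with (a := b) (o := r); [left; rewrite Hp; auto | lra | exact Hh].
  - apply mixed_halves_piece with (a := r) (o := b); [right; rewrite Hp; auto | lra | exact Hh].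
Qed.

Lemma drawn_piece b r P : drawn c F pick w b r P -> exists u, pick u = (b, r) /\ piece u P.
Proof.
  intros [[Ht Hh]|[[Hd Hh]|[Hm Hh]]].
  - exact (top_arc_piece Ht Hh).
  - exact (down_arc_piece Hd Hh).
  - exact (mixed_arc_piece Hm Hh).
Qed.

Lemma pieces_meet_on_D u1 u2 P : pick u1 <> pick u2 -> piece u1 P -> piece u2 P ->
  offset P = 0.
Proof.
  intros N (a1 & z1 & o1 & C1 & S1) (a2 & z2 & o2 & C2 & S2).
  destruct (Rtotal_order (offset P) 0) as [Hs|[Hs|Hs]]; [exfalso| exact Hs |exfalso].
  - destruct S1 as [[? _]|[_ U1]]; [lra|]. destruct S2 as [[? _]|[_ U2]]; [lra|].
    apply (upper_pieces_disjoint mirror_model U1 U2 N (s := - foot P) (E := offset P ^ 2 / 4));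
      unfold mt; nra.
  - destruct S1 as [[_ U1]|[? _]]; [|lra]. destruct S2 as [[_ U2]|[? _]]; [|lra].
    apply (upper_pieces_disjoint frames_model U1 U2 N (s := foot P) (E := offset P ^ 2 / 4));
      nra.
Qed.

Lemma piece_on_D u P : piece u P -> offset P = 0 ->
  exists z, arc_node B Rd pick u z /\ P = cor (F z).
Proof.
  intros (a & z & o & C & S) H0. rewrite H0 in C.
  assert (Nodes : arc_node B Rd pick u a /\ arc_node B Rd pick u z).
  { destruct S as [[_ U]|[_ U]]; exact (upper_piece_nodes U). }
  assert (Hz : exists x, arc_node B Rd pick u x /\ foot P = t x).
  { destruct (Rmult_integral (foot P - t a) (foot P - t z)) as [Q|Q]; [lra| |];
      [exists a | exists z]; split; try tauto; lra. }
  destruct Hz as (x & Hx & Fx). exists x. split; [exact Hx|].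
  destruct P as [p q]. unfold cor, foot, offset in *; simpl in *.
  rewrite (cy_cor x). f_equal; unfold t in *; lra.
Qed.

Lemma drawn_arcs_meet_at_common_end b1 r1 b2 r2 P : (b1, r1) <> (b2, r2) ->
  drawn c F pick w b1 r1 P -> drawn c F pick w b2 r2 P ->
  exists x, (x = b1 \/ x = r1) /\ (x = b2 \/ x = r2) /\ P = cor (F x).
Proof.
  intros N D1 D2.
  destruct (drawn_piece D1) as (u1 & E1 & Q1), (drawn_piece D2) as (u2 & E2 & Q2).
  assert (Nu : pick u1 <> pick u2) by congruence.
  destruct (piece_on_D Q1 (pieces_meet_on_D Nu Q1 Q2)) as (x & X1 & Hx).
  destruct (piece_on_D Q2 (pieces_meet_on_D Nu Q1 Q2)) as (y & X2 & Hy).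
  assert (x = y) by (apply cor_inj; congruence). subst y.
  destruct (arc_node_common frames_model Nu X1 X2) as [H1 H2].
  rewrite E1 in H1; rewrite E2 in H2. exists x; auto.
Qed.

End Frames.

Theorem mainTheorem4 :
  forall (c : R) (I : Type) (F : I -> Lframe) (B Rd : I -> Prop)
         (pick : I -> I * I) (w : I -> I -> I),
    (exists l : list I, forall i, In i l) ->
    (forall i, anchored_above c (F i)) ->
    (forall i j, cor (F i) = cor (F j) -> i = j) ->
    dominating F B -> dominating F Rd ->
    (forall i, B i -> Rd i -> False) ->
    valid_pick F B Rd pick ->
    valid_mixed_witness F pick w ->
    forall b1 r1 b2 r2 (P : point),
      arc pick b1 r1 -> arc pick b2 r2 -> (b1, r1) <> (b2, r2) ->
      drawn c F pick w b1 r1 P -> drawn c F pick w b2 r2 P ->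
      exists x, (x = b1 \/ x = r1) /\ (x = b2 \/ x = r2) /\ P = cor (F x).
Proof.
  intros c I F B Rd pick w _ Hanc Hinj _ _ Hdisj Hpick Hw b1 r1 b2 r2 P _ _.
  exact (@drawn_arcs_meet_at_common_end c I F B Rd pick w Hanc Hinj Hdisj Hpick Hw
           b1 r1 b2 r2 P).
Qed.
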